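(* Let $N\ge3$ be an integer, $p>(N+2)/(N-2)$, $b>0$, $\lambda>0$, and suppose the problem $u''+\frac{N-1}{r}u'+\lambda u+u^p=0$ on $(0,b)$, $u'(0)=u(b)=0$, has a positive solution $u_0$. Let $\phi$ be the solution of $\phi''+\frac{N-1}{r}\phi'+\lambda\phi=0$ for $r>0$, $\phi(0)=1$, $\phi'(0)=0$. Then $\phi(r)>0$ for all $r\in[0,b]$.
   Context: A positive solution means $u_0(r)>0$ for $r\in[0,b)$. *)

From Stdlib Require Import Reals.
From Coquelicot Require Import Coquelicot.
Open Scope R_scope.

Definition positive_solution (N : nat) (p lam b : R) (u : R -> R) : Prop :=
  (forall r, 0 < r < b ->
     ex_derive u r /\ ex_derive (Derive u) r /\
     Derive (Derive u) r + (INR N - 1) / r * Derive u r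
       + lam * u r + Rpower (u r) p = 0) /\
  filterlim u (at_right 0) (locally (u 0)) /\
  filterlim (Derive u) (at_right 0) (locally 0) /\
  filterlim u (at_left b) (locally (u b)) /\
  u b = 0 /\
  (forall r, 0 <= r < b -> 0 < u r).

Definition linear_solution (N : nat) (lam : R) (phi : R -> R) : Prop :=
  (forall r, 0 < r ->
     ex_derive phi r /\ ex_derive (Derive phi) r /\
     Derive (Derive phi) r + (INR N - 1) / r * Derive phi r + lam * phi r = 0) /\
  filterlim phi (at_right 0) (locally (phi 0)) /\
  phi 0 = 1 /\
  filterlim (Derive phi) (at_right 0) (locally 0).

From Stdlib Require Import Reals Lra Lia.
From Coquelicot Require Import Coquelicot.
Open Scope R_scope.

(* The Wronskian W(r) = r^(N-1) (u0' phi - u0 phi') satisfies W' = - r^(N-1) u0^p phi.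
   If phi had a first zero z in (0, b], then W would decrease strictly on (0, z) starting
   from W(0+) = 0, whereas W(z-) = - z^(N-1) u0(z) phi'(z) >= 0 since phi'(z) <= 0.
   When z = b, u0' need not extend continuously to b, but the equation bounds the
   derivative of the flux r^(N-1) u0' near b, so u0' stays bounded and u0' phi -> 0 there. *)

Lemma filterlim_Rmult {T} (F : (T -> Prop) -> Prop) {FF : Filter F} (f g : T -> R) a b :
  filterlim f F (locally a) -> filterlim g F (locally b) ->
  filterlim (fun t => f t * g t) F (locally (a * b)).
Proof. intros Hf Hg. exact (filterlim_comp_2 _ _ _ Hf Hg (filterlim_mult a b)). Qed.

Lemma filterlim_Rminus {T} (F : (T -> Prop) -> Prop) {FF : Filter F} (f g : T -> R) a b :
  filterlim f F (locally a) -> filterlim g F (locally b) ->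
  filterlim (fun t => f t - g t) F (locally (a - b)).
Proof.
  intros Hf Hg. change (filterlim (fun t => plus (f t) (opp (g t))) F (locally (plus a (opp b)))).
  eapply filterlim_comp_2; [exact Hf | | exact (filterlim_plus a (opp b))].
  eapply filterlim_comp; [exact Hg | exact (filterlim_opp b)].
Qed.

Lemma filterlim_bounded_mult_0 {T} (F : (T -> Prop) -> Prop) {FF : Filter F} (f g : T -> R) M :
  F (fun t => Rabs (f t) <= M) -> filterlim g F (locally 0) ->
  filterlim (fun t => f t * g t) F (locally 0).
Proof.
  intros Hf Hg. apply filterlim_locally. intros eps.
  assert (HM : 0 < Rabs M + 1) by (pose proof (Rabs_pos M); lra).
  assert (He : 0 < eps / (Rabs M + 1)) by (apply Rdiv_lt_0_compat; [apply cond_pos | lra]).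
  pose proof (proj1 (filterlim_locally g 0) Hg (mkposreal _ He)) as Hg'.
  eapply filter_imp; [| exact (filter_and _ _ Hf Hg')].
  intros t [Hft Hgt]. change (Rabs (f t * g t - 0) < eps).
  change (Rabs (g t - 0) < eps / (Rabs M + 1)) in Hgt.
  rewrite Rminus_0_r in *. rewrite Rabs_mult.
  apply Rle_lt_trans with ((Rabs M + 1) * Rabs (g t)).
  - apply Rmult_le_compat_r; [apply Rabs_pos |]. pose proof (RRle_abs M). lra.
  - replace (pos eps) with ((Rabs M + 1) * (eps / (Rabs M + 1))) by (field; lra).
    apply Rmult_lt_compat_l; lra.
Qed.

Lemma filterlim_eventually_bounded {T} (F : (T -> Prop) -> Prop) {FF : Filter F} (f : T -> R) l :
  filterlim f F (locally l) -> exists M, F (fun t => Rabs (f t) <= M).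
Proof.
  intros Hf. exists (Rabs l + 1).
  eapply filter_imp; [| exact (proj1 (filterlim_locally f l) Hf (mkposreal 1 Rlt_0_1))].
  intros t Ht. change (Rabs (f t - l) < 1) in Ht.
  pose proof (Rabs_triang_inv (f t) l). lra.
Qed.

Lemma filterlim_eventually_pos {T} (F : (T -> Prop) -> Prop) (f : T -> R) l :
  filterlim f F (locally l) -> 0 < l -> F (fun t => 0 < f t).
Proof. intros Hf Hl. exact (Hf _ (locally_open _ _ (open_gt 0) (fun _ H => H) l Hl)). Qed.

Lemma filterlim_eventually_neg {T} (F : (T -> Prop) -> Prop) (f : T -> R) l :
  filterlim f F (locally l) -> l < 0 -> F (fun t => f t < 0).
Proof. intros Hf Hl. exact (Hf _ (locally_open _ _ (open_lt 0) (fun _ H => H) l Hl)). Qed.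

Lemma continuous_within (f : R -> R) z (D : R -> Prop) :
  continuous f z -> filterlim f (within D (locally z)) (locally (f z)).
Proof. intros Hf. exact (filterlim_filter_le_1 _ (filter_le_within (F := locally z) D) Hf). Qed.

Lemma continuous_of_ex_derive (f : R -> R) x : ex_derive f x -> continuous f x.
Proof. exact (ex_derive_continuous (K := R_AbsRing) f x). Qed.

Lemma continuous_pow k x : continuous (fun s => s ^ k) x.
Proof.
  apply continuous_of_ex_derive. eexists. exact (is_derive_pow (fun s => s) k x 1 (is_derive_id x)).
Qed.

Lemma decreasing_of_derive_neg (f df : R -> R) a c :
  (forall x, a < x < c -> is_derive f x (df x) /\ df x < 0) ->
  forall s t, a < s -> s < t -> t < c -> f t < f s.
Proof.
  intros Hd s t Has Hst Htc. apply Ropp_lt_cancel.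
  apply (incr_function (fun x => - f x) a c (fun x => - df x)); simpl; try assumption.
  - intros x Hax Hxc. exact (is_derive_opp f x (df x) (proj1 (Hd x (conj Hax Hxc)))).
  - intros x Hax Hxc. pose proof (proj2 (Hd x (conj Hax Hxc))). lra.
Qed.

Lemma filterlim_at_left_lt_at_right_of_decreasing (f : R -> R) a c A C : a < c ->
  (forall s t, a < s -> s < t -> t < c -> f t < f s) ->
  filterlim f (at_right a) (locally A) -> filterlim f (at_left c) (locally C) -> C < A.
Proof.
  intros Hac Hdec HA HC.
  set (s := (2 * a + c) / 3). set (t := (a + 2 * c) / 3).
  assert (Hs : f s <= A).
  { refine (filterlim_le (F := at_right a) (fun _ => f s) f (f s) A _ (filterlim_const _) HA).
    assert (Hd : 0 < s - a) by (unfold s; lra).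
    exists (mkposreal _ Hd). intros y Hy Hay. change (Rabs (y - a) < s - a) in Hy.
    apply Rabs_def2 in Hy. left. apply Hdec; unfold s, t in *; lra. }
  assert (Ht : C <= f t).
  { refine (filterlim_le (F := at_left c) f (fun _ => f t) C (f t) _ HC (filterlim_const _)).
    assert (Hd : 0 < c - t) by (unfold t; lra).
    exists (mkposreal _ Hd). intros y Hy Hyc. change (Rabs (y - c) < c - t) in Hy.
    apply Rabs_def2 in Hy. left. apply Hdec; unfold s, t in *; lra. }
  assert (f t < f s) by (apply Hdec; unfold s, t; lra).
  lra.
Qed.

Lemma Rabs_sub_le_of_bounded_derive (f df : R -> R) a b M : a <= b ->
  (forall x, a <= x <= b -> is_derive f x (df x) /\ Rabs (df x) <= M) ->
  Rabs (f b - f a) <= M * (b - a).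
Proof.
  intros Hab Hd.
  destruct (MVT_abs f df a b) as [x [Heq Hx]].
  - intros x Hx. rewrite Rmin_left, Rmax_right in Hx by lra. apply is_derive_Reals, Hd, Hx.
  - rewrite Rmin_left, Rmax_right in Hx by lra.
    rewrite Heq, (Rabs_right (b - a)) by lra.
    apply Rmult_le_compat_r; [lra | apply Hd, Hx].
Qed.

Lemma is_derive_nonpos_at_first_root (f : R -> R) z l : 0 < z -> is_derive f z l -> f z = 0 ->
  (forall s, 0 < s < z -> 0 < f s) -> l <= 0.
Proof.
  intros Hz Hd Hfz Hpos. apply is_derive_Reals in Hd.
  destruct (Rle_lt_dec l 0) as [| Hl]; [assumption | exfalso].
  destruct (Hd l Hl) as [d Hdl].
  pose proof (cond_pos d).
  set (h := - Rmin (d / 2) (z / 2)).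
  pose proof (Rmin_l (d / 2) (z / 2)). pose proof (Rmin_r (d / 2) (z / 2)).
  assert (Hh : h < 0) by (apply Ropp_lt_gt_0_contravar, Rmin_glb_lt; lra).
  specialize (Hdl h ltac:(lra) ltac:(rewrite Rabs_left; unfold h in *; lra)).
  rewrite Hfz, Rminus_0_r in Hdl.
  assert (Hq : f (z + h) / h < 0).
  { apply Rdiv_pos_neg; [apply Hpos; unfold h in *; lra | exact Hh]. }
  apply Rabs_def2 in Hdl. lra.
Qed.

Lemma exists_first_root (f : R -> R) r : 0 < f 0 -> 0 < r -> f r <= 0 ->
  filterlim f (at_right 0) (locally (f 0)) -> (forall x, 0 < x <= r -> continuous f x) ->
  exists z, 0 < z <= r /\ (forall s, 0 <= s < z -> 0 < f s) /\ f z = 0.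
Proof.
  intros Hf0 Hr Hfr H0 Hc.
  set (E := fun x => 0 <= x <= r /\ forall s, 0 <= s <= x -> 0 < f s).
  assert (HE0 : E 0).
  { split; [lra |]. intros s Hs. replace s with 0 by lra. exact Hf0. }
  destruct (completeness E) as [z [Hub Hlub]].
  { exists r. intros x [Hx _]. lra. }
  { exists 0. exact HE0. }
  assert (Hzr : z <= r) by (apply Hlub; intros x [Hx _]; lra).
  assert (Hpos : forall s, 0 <= s < z -> 0 < f s).
  { intros s Hs. destruct (Rlt_or_le 0 (f s)) as [| Hfs]; [assumption | exfalso].
    assert (z <= s); [| lra].
    apply Hlub. intros x [_ Hx]. destruct (Rle_or_lt x s) as [| Hsx]; [assumption |].
    specialize (Hx s ltac:(lra)). lra. }
  assert (Hz0 : 0 < z).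
  { destruct (filterlim_eventually_pos _ _ _ H0 Hf0) as [d Hd].
    pose proof (cond_pos d). pose proof (Rmin_l (d / 2) r). pose proof (Rmin_r (d / 2) r).
    assert (0 < Rmin (d / 2) r) by (apply Rmin_glb_lt; lra).
    set (x := Rmin (d / 2) r).
    assert (HEx : E x).
    { split; [unfold x; lra |]. intros s Hs.
      destruct (Req_dec s 0) as [-> | Hs0]; [exact Hf0 |].
      apply Hd; [change (Rabs (s - 0) < d); rewrite Rabs_right |]; unfold x in Hs; lra. }
    pose proof (Hub x HEx). unfold x in *. lra. }
  exists z. split; [lra |]. split; [exact Hpos |].
  destruct (Rtotal_order (f z) 0) as [Hneg | [Hzero | Hgt]]; [exfalso | exact Hzero | exfalso].
  - destruct (filterlim_eventually_neg _ _ _ (Hc z (conj Hz0 Hzr)) Hneg) as [d Hd].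
    pose proof (cond_pos d).
    pose proof (Rmin_l (d / 2) (z / 2)). pose proof (Rmin_r (d / 2) (z / 2)).
    assert (0 < Rmin (d / 2) (z / 2)) by (apply Rmin_glb_lt; lra).
    set (s := z - Rmin (d / 2) (z / 2)).
    assert (f s < 0) by (apply Hd; change (Rabs (s - z) < d); rewrite Rabs_left; unfold s; lra).
    pose proof (Hpos s ltac:(unfold s; lra)). lra.
  - assert (Hzr' : z < r) by (destruct (Req_dec z r) as [-> | ]; lra).
    destruct (filterlim_eventually_pos _ _ _ (Hc z (conj Hz0 Hzr)) Hgt) as [d Hd].
    pose proof (cond_pos d).
    pose proof (Rmin_l (d / 2) (r - z)). pose proof (Rmin_r (d / 2) (r - z)).
    assert (0 < Rmin (d / 2) (r - z)) by (apply Rmin_glb_lt; lra).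
    set (x := z + Rmin (d / 2) (r - z)).
    assert (HEx : E x).
    { split; [unfold x; lra |]. intros s Hs.
      destruct (Rlt_or_le s z); [apply Hpos; lra |].
      apply Hd. change (Rabs (s - z) < d). rewrite Rabs_right; unfold x in Hs; lra. }
    pose proof (Hub x HEx). unfold x in *. lra.
Qed.

(* For a radial function on R^(k+1), radial_op k f is its Laplacian. *)
Definition radial_op (k : nat) (f : R -> R) (r : R) : R :=
  Derive (Derive f) r + INR k / r * Derive f r.

Definition radial_flux (k : nat) (f : R -> R) (r : R) : R := r ^ k * Derive f r.

Definition radial_wronskian (k : nat) (u v : R -> R) (r : R) : R :=
  r ^ k * (Derive u r * v r - u r * Derive v r).

Lemma is_derive_value_eq (f : R -> R) (x l l' : R) : is_derive f x l -> l = l' -> is_derive f x l'.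
Proof. intros H <-. exact H. Qed.

Lemma is_derive_pow_mult k (f : R -> R) r df : 0 < r -> is_derive f r df ->
  is_derive (fun s => s ^ k * f s) r (r ^ k * (df + INR k / r * f r)).
Proof.
  intros Hr Hf.
  pose proof (is_derive_pow (fun s => s) k r 1 (is_derive_id r)) as Hpow.
  pose proof (is_derive_mult _ _ r _ _ Hpow Hf Rmult_comm) as H.
  apply (is_derive_value_eq _ _ _ _ H). unfold plus, mult; simpl.
  destruct k; simpl; field; lra.
Qed.

Lemma is_derive_radial_flux k (f : R -> R) r : 0 < r -> ex_derive (Derive f) r ->
  is_derive (radial_flux k f) r (r ^ k * radial_op k f r).
Proof. intros Hr Hf. exact (is_derive_pow_mult k _ r _ Hr (Derive_correct _ _ Hf)). Qed.

Lemma is_derive_radial_wronskian k (u v : R -> R) r : 0 < r ->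
  ex_derive u r -> ex_derive (Derive u) r -> ex_derive v r -> ex_derive (Derive v) r ->
  is_derive (radial_wronskian k u v) r (r ^ k * (radial_op k u r * v r - u r * radial_op k v r)).
Proof.
  intros Hr Hu Hu' Hv Hv'.
  pose proof (is_derive_minus _ _ r _ _
    (is_derive_mult _ _ r _ _ (Derive_correct _ _ Hu') (Derive_correct _ _ Hv) Rmult_comm)
    (is_derive_mult _ _ r _ _ (Derive_correct _ _ Hu) (Derive_correct _ _ Hv') Rmult_comm)) as H.
  apply (is_derive_value_eq _ _ _ _ (is_derive_pow_mult k _ r _ Hr H)).
  unfold radial_op, minus, plus, opp, mult; simpl. ring.
Qed.

Lemma Derive_bounded_at_left_of_radial_op k (u : R -> R) c M : 0 < c ->
  (forall x, 0 < x < c -> ex_derive (Derive u) x) ->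
  at_left c (fun t => Rabs (radial_op k u t) <= M) ->
  exists M', at_left c (fun t => Rabs (Derive u t) <= M').
Proof.
  intros Hc Hu [d Hd].
  pose proof (cond_pos d). pose proof (Rmin_l d c). pose proof (Rmin_r d c).
  assert (0 < Rmin d c) by (apply Rmin_glb_lt; lra).
  set (t0 := c - Rmin d c / 2).
  assert (Ht0 : 0 < t0 < c /\ c - d < t0) by (unfold t0; lra).
  assert (Hop : forall x, t0 <= x < c -> Rabs (radial_op k u x) <= M).
  { intros x Hx. apply Hd; [change (Rabs (x - c) < d); rewrite Rabs_left |]; lra. }
  assert (HM : 0 <= M) by (pose proof (Rabs_pos (radial_op k u t0)); pose proof (Hop t0); lra).
  set (K := Rabs (radial_flux k u t0) + c ^ k * M * c).
  exists (K / t0 ^ k). exists (mkposreal (c - t0) ltac:(lra)). intros t Ht Htc.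
  change (Rabs (t - c) < c - t0) in Ht. apply Rabs_def2 in Ht.
  assert (Hflux : Rabs (radial_flux k u t - radial_flux k u t0) <= c ^ k * M * (t - t0)).
  { apply (Rabs_sub_le_of_bounded_derive _ (fun x => x ^ k * radial_op k u x)); [lra |].
    intros x Hx. split.
    - apply is_derive_radial_flux, Hu; lra.
    - rewrite Rabs_mult, Rabs_right by (apply Rle_ge, pow_le; lra).
      apply Rmult_le_compat; [apply pow_le; lra | apply Rabs_pos | apply pow_incr; lra |].
      apply Hop. lra. }
  assert (HK : Rabs (t ^ k * Derive u t) <= K).
  { pose proof (Rabs_triang_inv (radial_flux k u t) (radial_flux k u t0)).
    assert (c ^ k * M * (t - t0) <= c ^ k * M * c)
      by (apply Rmult_le_compat_l; [apply Rmult_le_pos; [apply pow_le |] |]; lra).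
    unfold K, radial_flux in *. lra. }
  apply Rle_div_r; [apply pow_lt; lra |].
  rewrite Rabs_mult, Rabs_right in HK by (apply Rle_ge, pow_le; lra).
  apply Rle_trans with (Rabs (Derive u t) * t ^ k); [| lra].
  apply Rmult_le_compat_l; [apply Rabs_pos | apply pow_incr; lra].
Qed.

Lemma Rpower_pos x y : 0 < Rpower x y.
Proof. apply exp_pos. Qed.

Lemma Rpower_lt_1 x y : 0 < y -> 0 < x < 1 -> Rpower x y < 1.
Proof.
  intros Hy Hx.
  assert (H1 : Rpower 1 y = 1) by (unfold Rpower; rewrite ln_1, Rmult_0_r; apply exp_0).
  rewrite <- H1. apply Rlt_Rpower_l; lra.
Qed.

Section Wronskian_argument.

Variables (k : nat) (p lam b : R) (u phi : R -> R).

Hypothesis p_pos : 0 < p.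
Hypothesis u_ode : forall r, 0 < r < b ->
  ex_derive u r /\ ex_derive (Derive u) r /\ radial_op k u r + lam * u r + Rpower (u r) p = 0.
Hypothesis u_at_0 : filterlim u (at_right 0) (locally (u 0)).
Hypothesis Du_at_0 : filterlim (Derive u) (at_right 0) (locally 0).
Hypothesis u_at_b : filterlim u (at_left b) (locally (u b)).
Hypothesis u_b : u b = 0.
Hypothesis u_pos : forall r, 0 <= r < b -> 0 < u r.
Hypothesis phi_ode : forall r, 0 < r ->
  ex_derive phi r /\ ex_derive (Derive phi) r /\ radial_op k phi r + lam * phi r = 0.
Hypothesis phi_at_0 : filterlim phi (at_right 0) (locally (phi 0)).
Hypothesis phi_0 : 0 < phi 0.
Hypothesis Dphi_at_0 : filterlim (Derive phi) (at_right 0) (locally 0).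

Lemma is_derive_wronskian r : 0 < r < b ->
  is_derive (radial_wronskian k u phi) r (- (r ^ k * Rpower (u r) p * phi r)).
Proof.
  intros Hr.
  destruct (u_ode r Hr) as [Hu [Hu' Hu_eq]]. destruct (phi_ode r ltac:(lra)) as [Hv [Hv' Hv_eq]].
  apply (is_derive_value_eq _ _ _ _
           (is_derive_radial_wronskian k u phi r ltac:(lra) Hu Hu' Hv Hv')).
  replace (radial_op k u r) with (- (lam * u r + Rpower (u r) p)) by lra.
  replace (radial_op k phi r) with (- (lam * phi r)) by lra.
  ring.
Qed.

Lemma wronskian_at_right_0 : filterlim (radial_wronskian k u phi) (at_right 0) (locally 0).
Proof.
  assert (H : filterlim (radial_wronskian k u phi) (at_right 0)
                (locally (0 ^ k * (0 * phi 0 - u 0 * 0)))).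
  { apply (filterlim_Rmult (at_right 0)); [apply continuous_within, continuous_pow |].
    apply (filterlim_Rminus (at_right 0)); apply (filterlim_Rmult (at_right 0)); assumption. }
  replace (0 ^ k * (0 * phi 0 - u 0 * 0)) with 0 in H by ring. exact H.
Qed.

Lemma u_at_left r : 0 < r <= b -> filterlim u (at_left r) (locally (u r)).
Proof.
  intros Hr. destruct (Req_dec r b) as [-> | Hrb]; [exact u_at_b |].
  apply continuous_within, continuous_of_ex_derive, u_ode. lra.
Qed.

Lemma Derive_u_bounded_at_left r : 0 < r <= b ->
  exists M, at_left r (fun t => Rabs (Derive u t) <= M).
Proof.
  intros Hr. destruct (Req_dec r b) as [-> | Hrb].
  - apply (Derive_bounded_at_left_of_radial_op k u b (Rabs lam + 1)); [lra | apply u_ode |].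
    rewrite u_b in u_at_b.
    destruct (proj1 (filterlim_locally u 0) u_at_b (mkposreal 1 Rlt_0_1)) as [d Hd].
    assert (Hd' : 0 < Rmin d b) by (apply Rmin_glb_lt; [apply cond_pos | lra]).
    exists (mkposreal _ Hd'). intros t Ht Htb.
    change (Rabs (t - b) < Rmin d b) in Ht. pose proof (Rmin_l d b). pose proof (Rmin_r d b).
    apply Rabs_def2 in Ht.
    assert (Hut : 0 < u t < 1).
    { split; [apply u_pos; lra |].
      specialize (Hd t ltac:(change (Rabs (t - b) < d); rewrite Rabs_left; lra) Htb).
      change (Rabs (u t - 0) < 1) in Hd. apply Rabs_def2 in Hd. lra. }
    destruct (u_ode t ltac:(lra)) as [_ [_ Hode]].
    pose proof (Rpower_lt_1 (u t) p p_pos Hut). pose proof (Rpower_pos (u t) p).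
    replace (radial_op k u t) with (- (lam * u t + Rpower (u t) p)) by lra.
    rewrite Rabs_Ropp. eapply Rle_trans; [apply Rabs_triang |].
    rewrite Rabs_mult, (Rabs_right (u t)), (Rabs_right (Rpower _ _)) by lra.
    pose proof (Rabs_pos lam). nra.
  - apply (filterlim_eventually_bounded _ _ (Derive u r)).
    apply continuous_within, continuous_of_ex_derive, u_ode. lra.
Qed.

Lemma phi_pos r : 0 <= r <= b -> 0 < phi r.
Proof.
  intros [Hr0 Hrb]. destruct (Rlt_or_le 0 (phi r)) as [| Hneg]; [assumption | exfalso].
  destruct Hr0 as [Hr0 | <-]; [| lra].
  destruct (exists_first_root phi r phi_0 Hr0 Hneg phi_at_0) as [z [[Hz0 Hzr] [Hpos Hz]]].
  { intros x Hx. apply continuous_of_ex_derive, phi_ode. lra. }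
  assert (Hdec : forall s t, 0 < s -> s < t -> t < z ->
    radial_wronskian k u phi t < radial_wronskian k u phi s).
  { apply (decreasing_of_derive_neg _ (fun x => - (x ^ k * Rpower (u x) p * phi x))).
    intros x Hx. split; [apply is_derive_wronskian; lra |].
    apply Ropp_lt_gt_0_contravar. repeat apply Rmult_lt_0_compat.
    - apply pow_lt. lra.
    - apply Rpower_pos.
    - apply Hpos. lra. }
  destruct (Derive_u_bounded_at_left z ltac:(lra)) as [M HM].
  destruct (phi_ode z Hz0) as [Hphi [Hphi' _]].
  assert (HWz : filterlim (radial_wronskian k u phi) (at_left z)
                  (locally (z ^ k * (0 - u z * Derive phi z)))).
  { apply (filterlim_Rmult (at_left z)); [apply continuous_within, continuous_pow |].
    apply (filterlim_Rminus (at_left z)).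
    - apply (filterlim_bounded_mult_0 _ _ _ M HM). rewrite <- Hz.
      apply continuous_within, continuous_of_ex_derive, Hphi.
    - apply (filterlim_Rmult (at_left z)); [apply u_at_left; lra |].
      apply continuous_within, continuous_of_ex_derive, Hphi'. }
  pose proof (filterlim_at_left_lt_at_right_of_decreasing _ 0 z _ _ Hz0 Hdec
                wronskian_at_right_0 HWz).
  assert (Dphi_z : Derive phi z <= 0).
  { apply (is_derive_nonpos_at_first_root phi z); [exact Hz0 | | exact Hz |].
    - exact (Derive_correct _ _ Hphi).
    - intros s Hs. apply Hpos. lra. }
  assert (u_z : 0 <= u z) by (destruct (Req_dec z b) as [-> | ]; [lra | left; apply u_pos; lra]).
  assert (0 <= z ^ k * (0 - u z * Derive phi z)) by (apply Rmult_le_pos; [apply pow_le | nra]; lra).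
  lra.
Qed.

End Wronskian_argument.

Theorem lemma2p1 (N : nat) (p b lam : R) (u0 phi : R -> R) :
  (3 <= N)%nat ->
  (INR N + 2) / (INR N - 2) < p ->
  0 < b -> 0 < lam ->
  positive_solution N p lam b u0 ->
  linear_solution N lam phi ->
  forall r, 0 <= r <= b -> 0 < phi r.
Proof.
  intros HN Hp _ _ [Hu [Hu0 [Hdu0 [Hub [Hub0 Hupos]]]]] [Hphi [Hphi0 [Hphi1 Hdphi0]]].
  assert (HN3 : INR 3 <= INR N) by (apply le_INR; exact HN). simpl in HN3.
  assert (Hp0 : 0 < p) by (eapply Rlt_trans; [apply Rdiv_lt_0_compat | exact Hp]; lra).
  assert (Hk : INR N - 1 = INR (N - 1)) by (rewrite minus_INR by lia; reflexivity).
  rewrite Hk in Hu, Hphi.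
  apply (phi_pos (N - 1) p lam b u0 phi); try assumption; lra.
Qed.
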